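(* Let $I$ be a nonzero ideal of $\mathbb{Z}[\sqrt{2}]$. Then there exists a generator $\alpha'$ of $I$ (i.e. $I=(\alpha')$) which is a shortest nonzero vector of $I$ under the canonical embedding, i.e. $\|\Sigma_{\mathbb{Q}(\sqrt2)}(\alpha')\|\le\|\Sigma_{\mathbb{Q}(\sqrt2)}(\gamma)\|$ for every nonzero $\gamma\in I$.
   Context: The canonical embedding of $\mathbb{Q}(\sqrt2)$ is $\Sigma_{\mathbb{Q}(\sqrt2)}(x)=(x,\tau(x))$, where $\tau$ is the nontrivial automorphism ($\tau(\sqrt2)=-\sqrt2$), with $\|\Sigma_{\mathbb{Q}(\sqrt2)}(x)\|^2=x^2+\tau(x)^2$. *)

From Stdlib Require Import Reals ZArith.
Open Scope R_scope.

(* The element  a + b*sqrt 2  of Z[sqrt 2] is represented by (a, b). *)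
Record zsqrt2 : Type := mkZS { zs_a : Z; zs_b : Z }.

Definition zs0 : zsqrt2 := mkZS 0 0.
Definition zs_add (x y : zsqrt2) : zsqrt2 :=
  mkZS (zs_a x + zs_a y)%Z (zs_b x + zs_b y)%Z.
Definition zs_mul (x y : zsqrt2) : zsqrt2 :=
  mkZS (zs_a x * zs_a y + 2 * zs_b x * zs_b y)%Z
       (zs_a x * zs_b y + zs_b x * zs_a y)%Z.

Definition is_ideal (I : zsqrt2 -> Prop) : Prop :=
  I zs0 /\
  (forall x y, I x -> I y -> I (zs_add x y)) /\
  (forall r x, I x -> I (zs_mul r x)).

Definition generates (g : zsqrt2) (I : zsqrt2 -> Prop) : Prop :=
  forall x, I x <-> exists r, x = zs_mul r g.

(* The two real embeddings: identity and tau (sqrt 2 |-> - sqrt 2). *)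
Definition emb_id (x : zsqrt2) : R := IZR (zs_a x) + IZR (zs_b x) * sqrt 2.
Definition emb_tau (x : zsqrt2) : R := IZR (zs_a x) - IZR (zs_b x) * sqrt 2.

Definition Sigma_norm (x : zsqrt2) : R :=
  sqrt (emb_id x ^ 2 + emb_tau x ^ 2).

(* The field norm N(a + b sqrt 2) = a^2 - 2 b^2 is multiplicative and makes
   Z[sqrt 2] Euclidean, so a nonzero element of I of least |N| generates I; the
   generators of I are then exactly its elements of least |N|.  Since
   ||Sigma(a + b sqrt 2)||^2 = 2 (a^2 + 2 b^2) =: 2 Q, we pick among these
   generators one, g, of least Q.  Multiplying by the units 1 + sqrt 2 and
   -1 + sqrt 2 (of norm -1) shows Q(g) < 2 |N(g)|.  Any other nonzero c = r g of
   I is either again a generator, so Q(g) <= Q(c), or has |N(r)| >= 2, and then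
   Q(c) >= |N(c)| >= 2 |N(g)| > Q(g). *)
From Stdlib Require Import Reals ZArith.
From Stdlib Require Import Lia Lra Wf_nat Classical.
Open Scope R_scope.

Lemma Z_measure_min_exists {T : Type} (P : T -> Prop) (f : T -> Z) :
  (forall y, P y -> (0 <= f y)%Z) -> (exists y, P y) ->
  exists y, P y /\ forall z, P z -> (f y <= f z)%Z.
Proof.
  intros Hpos [y0 Py0].
  destruct (dec_inh_nat_subset_has_unique_least_element
              (fun n => exists y, P y /\ Z.to_nat (f y) = n))
    as [n [[[y [Py <-]] Hleast] _]].
  - intro n; apply classic.
  - exists (Z.to_nat (f y0)), y0; auto.
  - exists y; split; [exact Py|].
    intros z Pz.
    specialize (Hleast _ (ex_intro _ z (conj Pz eq_refl))).
    pose proof (Hpos y Py); pose proof (Hpos z Pz); lia.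
Qed.

Lemma Z_sq_eq_twice_sq (a b : Z) : (a * a = 2 * b * b -> a = 0)%Z.
Proof.
  remember (Z.abs_nat a) as n eqn:Hn. revert a b Hn.
  induction n as [n IH] using lt_wf_ind; intros a b Hn H.
  destruct (Z.Even_or_Odd a) as [[k ->]|[k ->]]; [|ring_simplify in H; lia].
  assert (Hb : (b * b = 2 * k * k)%Z) by lia.
  destruct (Z.eq_dec b 0) as [->|Hb0]; [nia|].
  exfalso; apply Hb0, (IH (Z.abs_nat b) ltac:(nia) b k eq_refl Hb).
Qed.

Lemma Z_round_div (p n : Z) :
  n <> 0%Z -> exists m, (2 * Z.abs (p - m * n) <= Z.abs n)%Z.
Proof.
  intro Hn.
  pose proof (Z.div_mod p n Hn).
  destruct (Z_lt_le_dec 0 n) as [Hpos|Hneg].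
  - pose proof (Z.mod_pos_bound p n Hpos).
    destruct (Z_le_gt_dec (2 * (p mod n)) n);
      [exists (p / n)%Z | exists (p / n + 1)%Z]; nia.
  - pose proof (Z.mod_neg_bound p n ltac:(lia)).
    destruct (Z_le_gt_dec (2 * - (p mod n)) (- n));
      [exists (p / n)%Z | exists (p / n + 1)%Z]; nia.
Qed.

Definition zs_opp (x : zsqrt2) : zsqrt2 := mkZS (- zs_a x) (- zs_b x).
Definition zs_sub (x y : zsqrt2) : zsqrt2 := zs_add x (zs_opp y).

Lemma zs_sub_eq0 (x y : zsqrt2) : zs_sub x y = zs0 -> x = y.
Proof.
  destruct x as [a b], y as [c d]; unfold zs_sub, zs_add, zs_opp, zs0; cbn [zs_a zs_b].
  intro E; injection E as Ea Eb; f_equal; lia.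
Qed.

Definition zs_norm (x : zsqrt2) : Z := (zs_a x * zs_a x - 2 * zs_b x * zs_b x)%Z.

Definition zs_qform (x : zsqrt2) : Z := (zs_a x * zs_a x + 2 * zs_b x * zs_b x)%Z.

Lemma zs_norm_mul (x y : zsqrt2) : zs_norm (zs_mul x y) = (zs_norm x * zs_norm y)%Z.
Proof. destruct x as [a b], y as [c d]; unfold zs_norm, zs_mul; cbn [zs_a zs_b]; ring. Qed.

Lemma zs_norm_eq0 (x : zsqrt2) : zs_norm x = 0%Z -> x = zs0.
Proof.
  destruct x as [a b]; unfold zs_norm, zs0; cbn [zs_a zs_b]; intro H.
  assert (Ha : a = 0%Z) by (apply (Z_sq_eq_twice_sq a b); lia).
  subst a; f_equal; nia.
Qed.

Lemma zs_norm_neq0 (x : zsqrt2) : x <> zs0 -> zs_norm x <> 0%Z.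
Proof. intros Hx E; exact (Hx (zs_norm_eq0 x E)). Qed.

Lemma zs_qform_ge0 (x : zsqrt2) : (0 <= zs_qform x)%Z.
Proof. unfold zs_qform; nia. Qed.

Lemma zs_abs_norm_le_qform (x : zsqrt2) : (Z.abs (zs_norm x) <= zs_qform x)%Z.
Proof. unfold zs_norm, zs_qform; apply Z.abs_le; nia. Qed.

Lemma Sigma_norm_qform (x : zsqrt2) : Sigma_norm x = sqrt (2 * IZR (zs_qform x)).
Proof.
  unfold Sigma_norm, emb_id, emb_tau, zs_qform; f_equal.
  rewrite plus_IZR, !mult_IZR.
  set (a := IZR (zs_a x)); set (b := IZR (zs_b x)).
  transitivity (2 * a ^ 2 + 2 * b ^ 2 * (sqrt 2 * sqrt 2)); [ring|].
  rewrite sqrt_sqrt by lra; ring.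
Qed.

Lemma zs_norm_euclid (x g : zsqrt2) :
  g <> zs0 -> exists q, (Z.abs (zs_norm (zs_sub x (zs_mul q g))) < Z.abs (zs_norm g))%Z.
Proof.
  intro Hg; pose proof (zs_norm_neq0 g Hg) as Hn.
  destruct g as [a b], x as [c d]; set (n := zs_norm (mkZS a b)) in *.
  (* Round the coordinates of x * conj g = (c a - 2 d b) + (d a - c b) sqrt 2. *)
  destruct (Z_round_div (c * a - 2 * d * b) n Hn) as [m Hm].
  destruct (Z_round_div (d * a - c * b) n Hn) as [k Hk].
  exists (mkZS m k).
  set (e := (c * a - 2 * d * b - m * n)%Z) in *.
  set (f := (d * a - c * b - k * n)%Z) in *.
  set (r := zs_norm _).
  assert (Hr : (r * n = e * e - 2 * f * f)%Z)
    by (unfold r, e, f, n, zs_norm, zs_sub, zs_opp, zs_add, zs_mul; cbn [zs_a zs_b]; ring).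
  assert (Hrn : (Z.abs r * Z.abs n < Z.abs n * Z.abs n)%Z).
  { rewrite <- Z.abs_mul, Hr, Z.abs_square; apply Z.abs_lt; nia. }
  nia.
Qed.

Lemma zs_qform_reduce_by_unit (y : zsqrt2) :
  y <> zs0 -> (2 * Z.abs (zs_norm y) <= zs_qform y)%Z ->
  exists u, zs_norm u = (-1)%Z /\ (zs_qform (zs_mul u y) < zs_qform y)%Z.
Proof.
  intros Hy Hq; pose proof (zs_norm_neq0 y Hy) as Hnz.
  destruct y as [a b]; unfold zs_norm, zs_qform, zs_mul in *; cbn [zs_a zs_b] in *.
  (* Multiplying by (+-1 + sqrt 2) lowers Q exactly when a^2 + 2 b^2 < 4 |a b|, i.e.
     when |a/b| lies between the roots 2 -+ sqrt 2; the hypothesis forces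
     |a/b| into [sqrt (2/3), sqrt 6]. *)
  assert (Hab : (a * a + 2 * b * b < 4 * Z.abs (a * b))%Z).
  { rewrite Z.abs_mul.
    pose proof (Z.abs_square a); pose proof (Z.abs_square b).
    pose proof (Z.abs_nonneg a); pose proof (Z.abs_nonneg b).
    destruct (Z_le_gt_dec (2 * b * b) (a * a)).
    - rewrite Z.abs_eq in Hq by lia.
      assert (Z.abs b <= Z.abs a)%Z by nia.
      assert (Z.abs a <= 3 * Z.abs b)%Z by nia.
      nia.
    - rewrite Z.abs_neq in Hq by lia.
      assert (2 * Z.abs b <= 3 * Z.abs a)%Z by nia.
      assert (Z.abs a <= 2 * Z.abs b)%Z by nia.
      nia. }
  destruct (Z_le_gt_dec 0 (a * b)).
  - exists (mkZS (-1) 1); cbn [zs_a zs_b]; split; [reflexivity|].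
    rewrite Z.abs_eq in Hab by lia; lia.
  - exists (mkZS 1 1); cbn [zs_a zs_b]; split; [reflexivity|].
    rewrite Z.abs_neq in Hab by lia; lia.
Qed.

Section PrincipalIdeal.

Variable I : zsqrt2 -> Prop.
Hypothesis I_ideal : is_ideal I.

Lemma ideal_mul (r x : zsqrt2) : I x -> I (zs_mul r x).
Proof. apply I_ideal. Qed.

Lemma ideal_sub (x y : zsqrt2) : I x -> I y -> I (zs_sub x y).
Proof.
  intros Ix Iy; apply I_ideal; [exact Ix|].
  replace (zs_opp y) with (zs_mul (mkZS (-1) 0) y) by
    (destruct y as [a b]; unfold zs_mul, zs_opp; cbn [zs_a zs_b]; f_equal; ring).
  exact (ideal_mul _ _ Iy).
Qed.

Definition norm_minimal (g : zsqrt2) : Prop :=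
  I g /\ g <> zs0 /\
  forall c, I c -> c <> zs0 -> (Z.abs (zs_norm g) <= Z.abs (zs_norm c))%Z.

Lemma norm_minimal_exists : (exists x, I x /\ x <> zs0) -> exists g, norm_minimal g.
Proof.
  intro Hex.
  destruct (Z_measure_min_exists (fun z => I z /\ z <> zs0) (fun z => Z.abs (zs_norm z)))
    as [g [[Ig Hg] Hmin]]; [intros; lia | exact Hex |].
  exists g; repeat split; auto.
Qed.

Lemma norm_minimal_generates (g : zsqrt2) : norm_minimal g -> generates g I.
Proof.
  intros [Ig [Hg Hmin]] x; split.
  - intro Ix.
    destruct (zs_norm_euclid x g Hg) as [q Hq].
    exists q; apply zs_sub_eq0, NNPP; intro Hr.
    specialize (Hmin _ (ideal_sub _ _ Ix (ideal_mul q _ Ig)) Hr); lia.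
  - intros [r ->]; exact (ideal_mul r g Ig).
Qed.

Lemma norm_minimal_unit_mul (u g : zsqrt2) :
  zs_norm u = (-1)%Z -> norm_minimal g -> norm_minimal (zs_mul u g).
Proof.
  intros Hu [Ig [Hg Hmin]].
  assert (Hug : Z.abs (zs_norm (zs_mul u g)) = Z.abs (zs_norm g))
    by (rewrite zs_norm_mul, Hu; lia).
  repeat split.
  - exact (ideal_mul u g Ig).
  - intro E; apply (zs_norm_neq0 g Hg).
    rewrite E in Hug; change (zs_norm zs0) with 0%Z in Hug; lia.
  - intros c Ic Hc; rewrite Hug; exact (Hmin c Ic Hc).
Qed.

Lemma qform_minimal_generator_exists :
  (exists x, I x /\ x <> zs0) ->
  exists g, norm_minimal g /\
    forall h, norm_minimal h -> (zs_qform g <= zs_qform h)%Z.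
Proof.
  intro Hex.
  apply (Z_measure_min_exists norm_minimal zs_qform); [intros; apply zs_qform_ge0|].
  exact (norm_minimal_exists Hex).
Qed.

Lemma qform_minimal_generator_lt (g : zsqrt2) :
  norm_minimal g -> (forall h, norm_minimal h -> (zs_qform g <= zs_qform h)%Z) ->
  (zs_qform g < 2 * Z.abs (zs_norm g))%Z.
Proof.
  intros Hg Hmin.
  apply Z.nle_gt; intro Hq.
  destruct (zs_qform_reduce_by_unit g (proj1 (proj2 Hg)) Hq) as [u [Hu Hlt]].
  specialize (Hmin _ (norm_minimal_unit_mul u g Hu Hg)); lia.
Qed.

Lemma qform_minimal_generator_shortest (g : zsqrt2) :
  norm_minimal g -> (forall h, norm_minimal h -> (zs_qform g <= zs_qform h)%Z) ->
  forall c, I c -> c <> zs0 -> (zs_qform g <= zs_qform c)%Z.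
Proof.
  intros Hg Hmin c Ic Hc.
  pose proof (qform_minimal_generator_lt g Hg Hmin) as Hlt.
  destruct (proj1 (norm_minimal_generates g Hg c) Ic) as [r ->].
  pose proof (zs_abs_norm_le_qform (zs_mul r g)) as Hle.
  rewrite zs_norm_mul, Z.abs_mul in Hle.
  assert (Hr : zs_norm r <> 0%Z)
    by (intro E; apply Hc, zs_norm_eq0; rewrite zs_norm_mul, E; reflexivity).
  destruct (Z.eq_dec (Z.abs (zs_norm r)) 1) as [Hr1|Hr1].
  - apply Hmin; destruct Hg as [Ig [Hg0 Hgmin]]; repeat split; auto.
    intros w Iw Hw; rewrite zs_norm_mul, Z.abs_mul, Hr1, Z.mul_1_l; auto.
  - pose proof (Z.abs_nonneg (zs_norm g)); nia.
Qed.

End PrincipalIdeal.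

Theorem theorem6 (I : zsqrt2 -> Prop) :
  is_ideal I ->
  (exists x, I x /\ x <> zs0) ->
  exists g, generates g I /\
    (forall c, I c -> c <> zs0 -> Sigma_norm g <= Sigma_norm c).
Proof.
  intros HI Hex.
  destruct (qform_minimal_generator_exists I Hex) as [g [Hg Hmin]].
  exists g; split.
  - exact (norm_minimal_generates I HI g Hg).
  - intros c Ic Hc; rewrite !Sigma_norm_qform.
    apply sqrt_le_1_alt, Rmult_le_compat_l; [lra|].
    apply IZR_le, (qform_minimal_generator_shortest I HI g Hg Hmin c Ic Hc).
Qed.
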